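(* Let $k,n\ge1$, $T:\{0,1\}^k\to\{0,1\}$ a truth table, $(\mathbf z^{[1]},\mathbf z^{[0]},\mathbf z^{[-1]})$ a triple of $n$-bit strings with configuration basis numbers $(n_s)_{s\in\{0,1\}^3}$, and $f:\{0,1\}^3\to\mathbb C$ arbitrary. Then $$\mathbf E_\sigma f\big(\mathbf 1[\mathbf z^{[1]}\vdash\sigma],\mathbf 1[\mathbf z^{[0]}\vdash\sigma],\mathbf 1[\mathbf z^{[-1]}\vdash\sigma]\big)=\sum_{\mathbf y\in\{0,1\}^3}\sum_{\mathbf k\in\mathcal P(k)}f(\mathbf y)\,\frac{1}{2^k}\Big(\prod_{s\in\{0,1\}^3}\Big(\frac{n_s+n_{\bar s}}{n}\Big)^{k_s}\Big)\big|\mathcal Z(\mathbf y,\mathbf k)\big|.$$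
   Context: A clause on $n$ variables is $\sigma=((l_0,\nu_0),\dots,(l_{k-1},\nu_{k-1}))$ with $l_q\in\{0,\dots,n-1\}$, $\nu_q\in\{0,1\}$; $\mathbf x\in\{0,1\}^n$ satisfies $\sigma$ ($\mathbf x\vdash\sigma$) iff $T(x_{l_0}\oplus\nu_0,\dots,x_{l_{k-1}}\oplus\nu_{k-1})=1$. A random clause has all $l_q$ independent uniform in $\{0,\dots,n-1\}$ (repetitions allowed) and all $\nu_q$ independent uniform in $\{0,1\}$; $\mathbf E_\sigma$ is expectation over it. Configuration basis numbers of a triple of $q$-bit strings: $q_s=|\{j:(w^{[1]}_j,w^{[0]}_j,w^{[-1]}_j)=s\}|$, $s\in\{0,1\}^3$; $\bar s$ is the bitwise complement. $\mathcal P(k)$ is the set of families $(k_s)_{s\in\{0,1\}^3}$ of nonnegative integers summing to $k$. $\mathcal Z(\mathbf y,\mathbf k)$ is the set of triples $(\mathbf w^{[1]},\mathbf w^{[0]},\mathbf w^{[-1]})$ of $k$-bit strings with $T(\mathbf w^{[t]})=y^{[t]}$ for all $t\in\{1,0,-1\}$ and configuration basis numbers $\mathbf k$. *)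

From mathcomp Require Import all_boot all_order all_algebra.
Set Implicit Arguments. Unset Strict Implicit. Unset Printing Implicit Defensive.
Import Order.TTheory GRing.Theory Num.Theory.
Local Open Scope ring_scope.

Notation bits q := {ffun 'I_q -> bool}.
(* configuration labels s in {0,1}^3, written (s1, s0, s_{-1}) *)
Notation config := (bool * bool * bool)%type.

(* a clause on n variables with k literals: (l_q, nu_q)_{q<k} *)
Definition clause (n k : nat) := ({ffun 'I_k -> 'I_n} * {ffun 'I_k -> bool})%type.

Definition sat (n k : nat) (T : bits k -> bool) (x : bits n) (sigma : clause n k) : bool :=
  T [ffun q => addb (x (sigma.1 q)) (sigma.2 q)].

Definition Eclause (C : numFieldType) (n k : nat) (F : clause n k -> C) : C :=
  (#|{: clause n k}|%:R)^-1 * \sum_(sigma : clause n k) F sigma.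

Definition cbn (q : nat) (w1 w0 wm1 : bits q) (s : config) : nat :=
  #|[set j : 'I_q | (w1 j, w0 j, wm1 j) == s]|.

Definition cbar (s : config) : config := (~~ s.1.1, ~~ s.1.2, ~~ s.2).

Definition Pk (k : nat) : {set {ffun config -> 'I_k.+1}} :=
  [set kk : {ffun config -> 'I_k.+1} | (\sum_(s : config) (kk s : nat))%N == k].

Definition Zset (k : nat) (T : bits k -> bool) (y : config) (kk : {ffun config -> 'I_k.+1})
  : {set bits k * bits k * bits k} :=
  [set w | [&& T w.1.1 == y.1.1, T w.1.2 == y.1.2, T w.2 == y.2
           & [forall s, cbn w.1.1 w.1.2 w.2 s == kk s]]].

From mathcomp Require Import all_boot all_order all_algebra.
Import Order.TTheory GRing.Theory Num.Theory.
Local Open Scope ring_scope.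
Set Implicit Arguments. Unset Strict Implicit. Unset Printing Implicit Defensive.

(* Write w = (w^[1], w^[0], w^[-1]) for the triple of k-bit strings read off by a clause
   sigma, so that z^[t] |- sigma iff T(w^[t]) = 1.  Column q of w depends only on the literal
   (l_q, nu_q), and that literal yields column s exactly when (z^[1], z^[0], z^[-1]) has column
   s at l_q and nu_q = 0, or column s-bar and nu_q = 1.  Hence the number of clauses reading
   off w is prod_q (n_s + n_sbar) over the columns s of w, i.e. prod_s (n_s + n_sbar)^(k_s)
   with k_s the configuration basis numbers of w; dividing by the n^k 2^k clauses and
   grouping the triples w by (T(w^[t]))_t and (k_s)_s gives the sets Z(y, k). *)

Lemma sum_comp_fibers (V : nmodType) (A B : finType) (phi : A -> B) (F : B -> V) :
  \sum_(a : A) F (phi a) = \sum_(b : B) F b *+ #|[set a | phi a == b]|.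
Proof.
rewrite (partition_big phi predT) //; apply: eq_bigr => b _.
rewrite -sumr_const; apply: eq_big => [a|a /eqP <-] //; by rewrite inE.
Qed.

Lemma card_ffun_pairs (I A B : finType) (P : I -> A -> B -> bool) :
  #|[set s : {ffun I -> A} * {ffun I -> B} | [forall i, P i (s.1 i) (s.2 i)]]|
  = (\prod_i #|[set ab : A * B | P i ab.1 ab.2]|)%N.
Proof.
pose zip (s : {ffun I -> A} * {ffun I -> B}) : {dffun forall i : I, A * B} :=
  [ffun i => (s.1 i, s.2 i)].
pose unzip (g : {dffun forall i : I, A * B}) := ([ffun i => (g i).1], [ffun i => (g i).2]).
have zipK : cancel zip unzip.
  by case=> l v; congr (_, _); apply/ffunP => i; rewrite !ffunE.
have unzipK : cancel unzip zip.
  by move=> g; apply/ffunP => i; rewrite !ffunE; case: (g i).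
rewrite -cardsXn -(on_card_preimset (f := zip)); last by exists unzip.
apply: eq_card => s; rewrite !inE; apply: eq_forallb => i.
by rewrite ffunE !inE.
Qed.

Local Notation triple k := (bits k * bits k * bits k)%type.
Local Notation cbn_of w := (cbn w.1.1 w.1.2 w.2).

Definition column k (w : triple k) (q : 'I_k) : config := (w.1.1 q, w.1.2 q, w.2 q).

Definition truth_values k (T : bits k -> bool) (w : triple k) : config :=
  (T w.1.1, T w.1.2, T w.2).

Lemma eq_triple_column k (w w' : triple k) :
  (w == w') = [forall q, column w q == column w' q].
Proof.
apply/eqP/forallP => [-> //|E].
case: w w' E => [[w1 w0] wm1] [[w1' w0'] wm1'] E.
by congr (_, _, _); apply/ffunP => q; case/eqP: (E q).
Qed.

Lemma prod_column k (R : comPzSemiRingType) (w : triple k) (G : config -> R) :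
  \prod_q G (column w q) = \prod_s G s ^+ cbn_of w s.
Proof.
rewrite (partition_big (column w) predT) //; apply: eq_bigr => s _.
rewrite -prodr_const; apply: eq_big => [q|q /eqP <-] //; by rewrite inE.
Qed.

Lemma sum_cbn k (w : triple k) : (\sum_s cbn_of w s)%N = k.
Proof.
rewrite -[RHS]card_ord -sum1_card (partition_big (column w) predT) //=.
by apply: eq_bigr => s _; rewrite sum1dep_card.
Qed.

Definition cbn_family k (w : triple k) : {ffun config -> 'I_k.+1} :=
  [ffun s => inord (cbn_of w s)].

Lemma cbn_familyE k (w : triple k) s : cbn_family w s = cbn_of w s :> nat.
Proof.
have le_k : (cbn_of w s <= \sum_s' cbn_of w s')%N by rewrite (bigD1 s) //= leq_addr.
rewrite sum_cbn in le_k.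
by rewrite ffunE inordK // ltnS.
Qed.

Lemma cbn_family_Pk k (w : triple k) : cbn_family w \in Pk k.
Proof.
rewrite inE; apply/eqP; rewrite -[RHS](sum_cbn w).
by apply: eq_bigr => s _; rewrite cbn_familyE.
Qed.

Lemma in_Zset k (T : bits k -> bool) y kk (w : triple k) :
  (w \in Zset T y kk) = (truth_values T w == y) && (cbn_family w == kk).
Proof.
case: y => [[y1 y0] ym1]; rewrite inE -!andbA; congr [&& _, _, _ & _].
apply/forallP/eqP => [E|<- s]; last by rewrite cbn_familyE.
by apply/ffunP => s; apply: val_inj; rewrite /= cbn_familyE; apply/eqP.
Qed.

Lemma sum_over_Zset k (V : nmodType) (T : bits k -> bool) (F : triple k -> V) :
  \sum_w F w = \sum_y \sum_(kk in Pk k) \sum_(w in Zset T y kk) F w.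
Proof.
pose key w := (truth_values T w, cbn_family w).
rewrite (partition_big key (fun p => p.2 \in Pk k)) => [|w _]; last exact: cbn_family_Pk.
rewrite [RHS]pair_big_dep; apply: eq_bigr => -[y kk] _.
by apply: eq_bigl => w; rewrite in_Zset.
Qed.

Definition literal_config n (z1 z0 zm1 : bits n) (l : 'I_n) (nu : bool) : config :=
  (z1 l (+) nu, z0 l (+) nu, zm1 l (+) nu).

Definition clause_image n k (z1 z0 zm1 : bits n) (sigma : clause n k) : triple k :=
  ([ffun q => z1 (sigma.1 q) (+) sigma.2 q], [ffun q => z0 (sigma.1 q) (+) sigma.2 q],
   [ffun q => zm1 (sigma.1 q) (+) sigma.2 q]).

Section ClauseImage.

Variables (n : nat) (z1 z0 zm1 : bits n).

Local Notation literal_count s := (cbn z1 z0 zm1 s + cbn z1 z0 zm1 (cbar s))%N.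

Lemma card_literal_config s :
  #|[set ab : 'I_n * bool | literal_config z1 z0 zm1 ab.1 ab.2 == s]| = literal_count s.
Proof.
rewrite -sum1dep_card -(pair_big_dep xpredT (fun a b => literal_config z1 z0 zm1 a b == s)
  (fun _ _ => 1%N)) /=.
rewrite /cbn -!sum1dep_card [X in (X + _)%N]big_mkcond [X in (_ + X)%N]big_mkcond -big_split.
apply: eq_bigr => a _; rewrite big_mkcond big_bool /literal_config !addbT !addbF.
by case: s => [[s1 s0] sm1]; case: (z1 a); case: (z0 a); case: (zm1 a);
  case: s1; case: s0; case: sm1.
Qed.

Lemma column_clause_image k (sigma : clause n k) q :
  column (clause_image z1 z0 zm1 sigma) q = literal_config z1 z0 zm1 (sigma.1 q) (sigma.2 q).
Proof. by rewrite /column !ffunE. Qed.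

Lemma card_clause_fiber k (w : triple k) :
  #|[set sigma : clause n k | clause_image z1 z0 zm1 sigma == w]|
  = (\prod_q literal_count (column w q))%N.
Proof.
under [RHS]eq_bigr => q _ do rewrite -card_literal_config.
rewrite -(card_ffun_pairs (fun q a b => literal_config z1 z0 zm1 a b == column w q)).
apply: eq_card => sigma; rewrite !inE eq_triple_column.
by apply: eq_forallb => q; rewrite column_clause_image.
Qed.

Lemma clause_fiber_weight (C : fieldType) k (w : triple k) :
  (#|{: clause n k}|%:R)^-1 * #|[set sigma | clause_image z1 z0 zm1 sigma == w]|%:R
  = (2 ^ k)%:R^-1 * \prod_s ((literal_count s)%:R / n%:R) ^+ cbn_of w s :> C.
Proof.
rewrite card_prod !card_ffun !card_ord card_bool card_clause_fiber natr_prod.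
rewrite (prod_column w (fun s => (literal_count s)%:R)) natrM invfM mulrAC mulrC.
congr (_ * _).
have -> : (n ^ k)%:R = \prod_s n%:R ^+ cbn_of w s :> C by rewrite prodrXr sum_cbn natrX.
rewrite -prodfV -big_split /=; apply: eq_bigr => s _.
by rewrite -exprVn -exprMn mulrC.
Qed.

End ClauseImage.

Theorem mainTheorem9 (C : numClosedFieldType) (k n : nat) (hk : (0 < k)%N) (hn : (0 < n)%N)
  (T : bits k -> bool) (z1 z0 zm1 : bits n) (f : config -> C) :
  Eclause (fun sigma : clause n k => f (sat T z1 sigma, sat T z0 sigma, sat T zm1 sigma))
  = \sum_(y : config) \sum_(kk in Pk k)
      f y * (2 ^ k)%:R^-1
      * (\prod_(s : config)
           (((cbn z1 z0 zm1 s + cbn z1 z0 zm1 (cbar s))%:R / n%:R) ^+ kk s))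
      * #|Zset T y kk|%:R.
Proof.
rewrite /Eclause (sum_comp_fibers (clause_image z1 z0 zm1) (fun w => f (truth_values T w))).
rewrite mulr_sumr (sum_over_Zset T); apply: eq_bigr => y _; apply: eq_bigr => kk _.
rewrite [RHS]mulr_natr -[RHS]sumr_const; apply: eq_bigr => w; rewrite in_Zset.
case/andP => /eqP <- /eqP <-.
rewrite -(mulr_natr (f _)) mulrCA clause_fiber_weight mulrA; congr (_ * _).
by apply: eq_bigr => s _; rewrite cbn_familyE.
Qed.
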